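(* Let $N\ge1$, $m>1$, $\alpha,\beta\in\mathbb R$ with $N+\alpha-m>0$ and $\beta-\alpha+1>0$; let $s_0\ge0$, $\lambda>0$ and $\wp>0$. Let $u\in C^1(s_0,\infty)$ be a nonnegative solution of $$-(r^{N+\alpha-1}|u'(r)|^{m-2}u'(r))'=\lambda r^{N+\beta-1}u^{\wp}(r),\ r\in(s_0,\infty),\qquad u(s_0)=1,\quad u'(s_0)\le0.$$ Let $\varrho=\frac{N+\alpha-m}{m-1}$. Then the function $U_\varrho(r):=ru'(r)+\varrho u(r)$ is nonnegative and nonincreasing on $(s_0,\infty)$. In particular, $r^\varrho u(r)$ is nondecreasing on $(s_0,\infty)$. *)

From Stdlib Require Import Reals.
From Coquelicot Require Import Coquelicot.
Open Scope R_scope.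

(* Power x^p for x >= 0, with the convention 0^p = 0 (p > 0). *)
Definition rpow (x p : R) : R := if Rlt_dec 0 x then Rpower x p else 0.

(* phi_m(t) = |t|^(m-2) t, extended by continuity with phi_m(0) = 0 (m > 1). *)
Definition phim (m t : R) : R :=
  if Rlt_dec 0 t then Rpower t (m - 1)
  else if Rlt_dec t 0 then - Rpower (- t) (m - 1) else 0.

(** Let [w r = r^(rho+1) u'(r)].  As [r^(N+alpha-1) = (r^(rho+1))^(m-1)] and [phim m]
    is increasing and positively homogeneous of degree [m-1], the equation makes
    [phim m (w r)], hence [w], nonincreasing.  Since [u' = r^-(rho+1) w], for [r <= t]
    the map [x |-> rho u(x) + w(r) x^-rho] has derivative [rho x^-(rho+1) (w x - w r) <= 0]
    on [[r, t]], so it stays below its value [U r] at [x = r].  Letting [t] go to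
    infinity and using [u >= 0] gives [U r >= 0]; taking [t = r2] and [w r2 <= w r1]
    gives [U r2 <= U r1].  Finally [(r^rho u)' = r^(rho-1) U >= 0]. *)

From Stdlib Require Import Reals Lra.
From Coquelicot Require Import Coquelicot.
Open Scope R_scope.

Lemma Rpower_gt0 (x y : R) : 0 < Rpower x y.
Proof. exact (exp_pos _). Qed.

Lemma Rpower_plus1_mul_opp (x y : R) : 0 < x -> Rpower x (y + 1) * Rpower x (- y) = x.
Proof.
  intros hx. rewrite <- Rpower_plus. replace (y + 1 + - y) with 1 by ring.
  apply Rpower_1, hx.
Qed.

Lemma is_derive_Rpower (y x : R) : 0 < x ->
  is_derive (fun t => Rpower t y) x (y * Rpower x (y - 1)).
Proof. intros hx. apply is_derive_Reals, derivable_pt_lim_power, hx. Qed.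

Lemma is_lim_Rpower_opp_p_infty (rho : R) : 0 < rho ->
  is_lim (fun t => Rpower t (- rho)) p_infty 0.
Proof.
  intros hrho.
  apply (is_lim_comp exp (fun t => - rho * ln t) p_infty 0 m_infty).
  - exact is_lim_exp_m.
  - replace m_infty with (Rbar_mult (- rho) p_infty).
    + apply is_lim_scal_l, is_lim_ln_p.
    + simpl. case Rle_dec; [intros; exfalso; lra | reflexivity].
  - exists 0. intros t _. discriminate.
Qed.

Lemma is_derive_nonpos_le (f df : R -> R) (a b : R) : a <= b ->
  (forall x, a <= x <= b -> is_derive f x (df x)) ->
  (forall x, a <= x <= b -> df x <= 0) -> f b <= f a.
Proof.
  intros hab hd hneg.
  destruct (MVT_gen f a b df) as [c [hc hmvt]];
    rewrite ?Rmin_left, ?Rmax_right in * by lra.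
  - intros x hx. apply hd. lra.
  - intros x hx. apply continuity_pt_filterlim.
    apply (ex_derive_continuous (V := R_NormedModule)).
    exists (df x). apply hd. exact hx.
  - assert (df c <= 0) by (apply hneg; exact hc).
    assert (df c * (b - a) <= 0) by nra.
    lra.
Qed.

Lemma is_derive_nonneg_le (f df : R -> R) (a b : R) : a <= b ->
  (forall x, a <= x <= b -> is_derive f x (df x)) ->
  (forall x, a <= x <= b -> 0 <= df x) -> f a <= f b.
Proof.
  intros hab hd hpos.
  enough (- f b <= - f a) by lra.
  apply (is_derive_nonpos_le (fun x => - f x) (fun x => - df x)); [exact hab | |].
  - intros x hx. apply (is_derive_opp f x (df x)), hd, hx.
  - intros x hx. specialize (hpos x hx). lra.
Qed.

Lemma rpow_ge0 (x p : R) : 0 <= rpow x p.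
Proof. unfold rpow. destruct Rlt_dec; [left; apply Rpower_gt0 | lra]. Qed.

Lemma phim_lt (m x y : R) : 1 < m -> x < y -> phim m x < phim m y.
Proof.
  intros hm hxy. unfold phim.
  pose proof (Rpower_gt0 x (m - 1)). pose proof (Rpower_gt0 (- x) (m - 1)).
  pose proof (Rpower_gt0 y (m - 1)). pose proof (Rpower_gt0 (- y) (m - 1)).
  destruct (Rlt_dec 0 x), (Rlt_dec 0 y), (Rlt_dec x 0), (Rlt_dec y 0); try lra.
  - apply Rlt_Rpower_l; lra.
  - enough (Rpower (- y) (m - 1) < Rpower (- x) (m - 1)) by lra.
    apply Rlt_Rpower_l; lra.
Qed.

Lemma phim_le_inv (m x y : R) : 1 < m -> phim m x <= phim m y -> x <= y.
Proof.
  intros hm hle. destruct (Rle_lt_dec x y) as [| hyx]; [assumption |].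
  pose proof (phim_lt m y x hm hyx). lra.
Qed.

Lemma phim_homogeneous (m c x : R) : 0 < c ->
  Rpower c (m - 1) * phim m x = phim m (c * x).
Proof.
  intros hc. unfold phim.
  destruct (Rlt_dec 0 x), (Rlt_dec 0 (c * x)), (Rlt_dec x 0), (Rlt_dec (c * x) 0);
    try nra.
  - apply Rpower_mult_distr; lra.
  - replace (- (c * x)) with (c * - x) by ring.
    rewrite <- Rpower_mult_distr by lra. ring.
Qed.

Lemma Rpower_mul_nonincreasing_of_phim (m a s0 : R) (v df : R -> R) : 1 < m ->
  (forall r, s0 < r ->
     is_derive (fun t => Rpower t (a * (m - 1)) * phim m (v t)) r (df r)) ->
  (forall r, s0 < r -> df r <= 0) ->
  forall r1 r2, s0 < r1 -> r1 <= r2 -> Rpower r2 a * v r2 <= Rpower r1 a * v r1.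
Proof.
  intros hm hder hdf r1 r2 hr1 hr12.
  apply (phim_le_inv m); [exact hm |].
  rewrite <- !phim_homogeneous, !Rpower_mult by apply Rpower_gt0.
  apply (is_derive_nonpos_le (fun t => Rpower t (a * (m - 1)) * phim m (v t)) df);
    [exact hr12 | |];
    intros x hx; [apply hder | apply hdf]; lra.
Qed.

Section Nonincreasing_flux.

Variables (s0 rho : R) (u u' : R -> R).

Definition flux (r : R) : R := Rpower r (rho + 1) * u' r.

Definition U (r : R) : R := r * u' r + rho * u r.

Hypothesis hs0 : 0 <= s0.
Hypothesis hrho : 0 < rho.
Hypothesis hder : forall r, s0 < r -> is_derive u r (u' r).
Hypothesis hpos : forall r, s0 < r -> 0 <= u r.
Hypothesis hflux : forall r1 r2, s0 < r1 -> r1 <= r2 -> flux r2 <= flux r1.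

Lemma U_flux (r : R) : 0 < r -> U r = rho * u r + flux r * Rpower r (- rho).
Proof.
  intros hr. unfold U, flux.
  rewrite <- (Rpower_plus1_mul_opp r rho hr) at 1. ring.
Qed.

Lemma flux_bound (r t : R) : s0 < r -> r <= t ->
  rho * u t + flux r * Rpower t (- rho) <= U r.
Proof.
  intros hr hrt.
  rewrite U_flux by lra.
  set (c := flux r).
  apply (is_derive_nonpos_le (fun x => rho * u x + c * Rpower x (- rho))
           (fun x => rho * u' x + c * (- rho * Rpower x (- rho - 1)))); [exact hrt | |].
  - intros x hx.
    apply (is_derive_plus (fun x => rho * u x) (fun x => c * Rpower x (- rho)));
      apply is_derive_scal; [apply hder | apply is_derive_Rpower]; lra.
  - intros x hx.
    assert (hfx : flux x <= c) by (apply hflux; lra).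
    pose proof (Rpower_gt0 x (rho + 1)) as hpow.
    assert (hcoef : 0 < rho / Rpower x (rho + 1)) by (apply Rdiv_lt_0_compat; lra).
    replace (- rho - 1) with (- (rho + 1)) by ring.
    rewrite Rpower_Ropp.
    replace (rho * u' x + c * (- rho * / Rpower x (rho + 1)))
      with (rho / Rpower x (rho + 1) * (flux x - c)) by (unfold flux; field; lra).
    nra.
Qed.

Lemma U_ge0 (r : R) : s0 < r -> 0 <= U r.
Proof.
  intros hr.
  replace 0 with (flux r * 0) by ring.
  apply (closed_filterlim_loc (F := Rbar_locally p_infty)
           (fun t => flux r * Rpower t (- rho)) (fun y => y <= U r)).
  - apply (is_lim_scal_l _ _ p_infty 0), is_lim_Rpower_opp_p_infty, hrho.
  - exists r. intros t ht.
    pose proof (flux_bound r t hr ltac:(lra)).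
    assert (0 <= rho * u t) by (apply Rmult_le_pos; [lra | apply hpos; lra]).
    lra.
  - apply closed_le.
Qed.

Lemma U_nonincreasing (r1 r2 : R) : s0 < r1 -> r1 <= r2 -> U r2 <= U r1.
Proof.
  intros hr1 hr12.
  pose proof (flux_bound r1 r2 hr1 hr12).
  pose proof (hflux r1 r2 hr1 hr12).
  pose proof (Rpower_gt0 r2 (- rho)).
  rewrite U_flux by lra.
  nra.
Qed.

Lemma Rpower_mul_nondecreasing (r1 r2 : R) : s0 < r1 -> r1 <= r2 ->
  Rpower r1 rho * u r1 <= Rpower r2 rho * u r2.
Proof.
  intros hr1 hr12.
  apply (is_derive_nonneg_le (fun x => Rpower x rho * u x)
           (fun x => rho * Rpower x (rho - 1) * u x + Rpower x rho * u' x));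
    [exact hr12 | |].
  - intros x hx.
    apply (is_derive_mult (fun t => Rpower t rho) u x);
      [apply is_derive_Rpower | apply hder | exact Rmult_comm]; lra.
  - intros x hx.
    assert (hU : 0 <= U x) by (apply U_ge0; lra).
    pose proof (Rpower_gt0 x (rho - 1)).
    replace (Rpower x rho) with (Rpower x (rho - 1) * x).
    + unfold U in hU. nra.
    + rewrite <- (Rpower_1 x) at 2 by lra. rewrite <- Rpower_plus. f_equal. ring.
Qed.

End Nonincreasing_flux.

Theorem lemma3p1 (N : nat) (m alpha beta s0 lambda wp : R) (u u' : R -> R)
  (hN : (1 <= N)%nat) (hm : 1 < m)
  (hNam : 0 < INR N + alpha - m) (hba : 0 < beta - alpha + 1)
  (hs0 : 0 <= s0) (hlam : 0 < lambda) (hwp : 0 < wp)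
  (* u is C^1 on (s0, oo) with derivative u' *)
  (hder : forall r, s0 < r -> is_derive u r (u' r))
  (hcont : forall r, s0 < r -> continuous u' r)
  (* boundary behaviour at s0: u, u' extend continuously from the right *)
  (hu_s0 : filterlim u (at_right s0) (locally (u s0)))
  (hu'_s0 : filterlim u' (at_right s0) (locally (u' s0)))
  (* nonnegative solution *)
  (hpos : forall r, s0 <= r -> 0 <= u r)
  (* the equation -(r^(N+alpha-1) |u'|^(m-2) u')' = lambda r^(N+beta-1) u^wp *)
  (hode : forall r, s0 < r ->
     is_derive (fun t => Rpower t (INR N + alpha - 1) * phim m (u' t)) r
               (- (lambda * Rpower r (INR N + beta - 1) * rpow (u r) wp)))
  (hinit : u s0 = 1) (hinit' : u' s0 <= 0) :
  let rho := (INR N + alpha - m) / (m - 1) in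
  let U := fun r => r * u' r + rho * u r in
  (forall r, s0 < r -> 0 <= U r) /\
  (forall r1 r2, s0 < r1 -> r1 <= r2 -> U r2 <= U r1) /\
  (forall r1 r2, s0 < r1 -> r1 <= r2 ->
     Rpower r1 rho * u r1 <= Rpower r2 rho * u r2).
Proof.
  intros rho U.
  assert (hrho : 0 < rho) by (apply Rdiv_lt_0_compat; lra).
  assert (hpos' : forall r, s0 < r -> 0 <= u r) by (intros r hr; apply hpos; lra).
  replace (INR N + alpha - 1) with ((rho + 1) * (m - 1)) in hode
    by (unfold rho; field; lra).
  assert (hrhs : forall r, s0 < r ->
            - (lambda * Rpower r (INR N + beta - 1) * rpow (u r) wp) <= 0).
  { intros r _.
    pose proof (Rpower_gt0 r (INR N + beta - 1)). pose proof (rpow_ge0 (u r) wp).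
    enough (0 <= lambda * Rpower r (INR N + beta - 1) * rpow (u r) wp) by lra.
    apply Rmult_le_pos; [apply Rmult_le_pos |]; lra. }
  pose proof (Rpower_mul_nonincreasing_of_phim m (rho + 1) s0 u' _ hm hode hrhs)
    as hflux.
  split; [| split].
  - intros r hr. apply (U_ge0 s0 rho u u'); assumption.
  - intros r1 r2 hr1 hr12. apply (U_nonincreasing s0 rho u u'); assumption.
  - intros r1 r2 hr1 hr12. apply (Rpower_mul_nondecreasing s0 rho u u'); assumption.
Qed.
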